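(* Let $\rho>0$, $\xi>0$, and $H_0=\frac{1}{2(1+\rho r^2)}\big(P_r^2+\frac{P_\phi^2}{r^2}+\xi r^2\big)$ on $(r,\phi)\in(0,\infty)\times\mathbb{S}^1$, with quadratic integrals $S_1=\cos(2\phi)P_r\frac{P_\phi}{r}+\sin(2\phi)\big(H_0-\frac{P_\phi^2}{r^2}\big)$, $S_2=-\sin(2\phi)P_r\frac{P_\phi}{r}+\cos(2\phi)\big(H_0-\frac{P_\phi^2}{r^2}\big)$. Consider the closed trajectories on level sets $H_0=E$, $P_\phi=L>0$ with $E_+<E<\xi/(2\rho)$, where $E_+=L^2(-\rho+\sqrt{\rho^2+\xi/L^2})$, with $\phi$ normalized so that $\phi=0$ where $r$ is minimal. Then the action coordinates $I_\phi=\frac1{2\pi}\oint P_\phi\,d\phi$, $I_r=\frac1{2\pi}\oint P_r\,dr$ are $$I_\phi=L,\qquad J\equiv I_r+I_\phi=\frac{E}{\sqrt{\xi-2\rho E}},$$ the Hamiltonian is $H(J)=J\big(\sqrt{\xi+\rho^2J^2}-\rho J\big)$, and the quadratic integrals take the values $$S_1=0,\qquad S_2=-\sqrt{J^2-I_\phi^2}\,\big(\sqrt{\xi+\rho^2J^2}-\rho J\big).$$ *)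

From Stdlib Require Import Reals Lra.
From Coquelicot Require Import Coquelicot.
Open Scope R_scope.

Definition H0 (rho xi r pr pphi : R) : R :=
  / (2 * (1 + rho * r ^ 2)) * (pr ^ 2 + pphi ^ 2 / r ^ 2 + xi * r ^ 2).

Definition S1 (rho xi r phi pr pphi : R) : R :=
  cos (2 * phi) * pr * (pphi / r)
  + sin (2 * phi) * (H0 rho xi r pr pphi - pphi ^ 2 / r ^ 2).

Definition S2 (rho xi r phi pr pphi : R) : R :=
  - sin (2 * phi) * pr * (pphi / r)
  + cos (2 * phi) * (H0 rho xi r pr pphi - pphi ^ 2 / r ^ 2).

Definition E_plus (rho xi L : R) : R := L ^ 2 * (- rho + sqrt (rho ^ 2 + xi / L ^ 2)).

(* On the level set H0 = E, P_phi = L, the radial momentum satisfies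
   P_r^2 = Qrad r  (obtained by solving H0 r P_r L = E for P_r^2). *)
Definition Qrad (rho xi E L r : R) : R :=
  2 * (1 + rho * r ^ 2) * E - L ^ 2 / r ^ 2 - xi * r ^ 2.

(* I_r = (1/2pi) \oint P_r dr over the closed trajectory. *)
Definition Ir (rho xi E L a b : R) : R :=
  / (2 * PI) * (4 * RInt (fun r => sqrt (Qrad rho xi E L r)) a b).

Definition Iphi (L : R) : R := / (2 * PI) * RInt (fun _ => L) 0 (2 * PI).

Definition hamilton_solution (rho xi : R) (r phi pr pphi : R -> R) : Prop :=
  forall t,
    is_derive r t (Derive (fun p => H0 rho xi (r t) p (pphi t)) (pr t)) /\
    is_derive phi t (Derive (fun p => H0 rho xi (r t) (pr t) p) (pphi t)) /\
    is_derive pr t (- Derive (fun x => H0 rho xi x (pr t) (pphi t)) (r t)) /\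
    is_derive pphi t 0.

From Stdlib Require Import Reals Lra.
From Coquelicot Require Import Coquelicot.
Open Scope R_scope.

(* Put D = xi - 2 rho E > 0 and u = r^2.  On the level set H0 = E, P_phi = L one has
   P_r^2 r^2 = - (D u^2 - 2 E u + L^2), so the turning points a < b of the radial motion
   satisfy D (a^2 + b^2) = 2 E and L = sqrt D a b.  The radial action is sqrt D times the
   elementary integral of sqrt ((r^2 - a^2) (b^2 - r^2)) / r over [a, b], which is
   pi (b - a)^2 / 4; hence I_r = sqrt D (b - a)^2 / 2 = E / sqrt D - L.
   S1 and S2 are first integrals.  At the pericentre P_r = 0 and phi = 0, so S1 = 0 and
   S2 = D r_min^2 - E; r_min^2 is the smaller root, so this is - sqrt (E^2 - D L^2).
   The identity sqrt (xi + rho^2 J^2) - rho J = sqrt D turns all of this into the stated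
   formulas. *)

Lemma Iphi_eq (L : R) : Iphi L = L.
Proof.
  unfold Iphi; rewrite RInt_const; simpl; unfold scal; simpl; unfold mult; simpl.
  field; apply PI_neq0.
Qed.

Lemma sub_2rhoE_gt0 (rho xi E : R) : 0 < rho -> E < xi / (2 * rho) -> 0 < xi - 2 * rho * E.
Proof.
  intros rho_gt0 HE.
  apply (Rmult_lt_compat_r (2 * rho)) in HE; [|lra].
  replace (xi / (2 * rho) * (2 * rho)) with xi in HE by (field; lra); lra.
Qed.

Lemma sqrt_xi_rhoJ_sub (rho xi E : R) : 0 < rho -> 0 < xi -> 0 < xi - 2 * rho * E ->
  sqrt (xi + rho ^ 2 * (E / sqrt (xi - 2 * rho * E)) ^ 2) - rho * (E / sqrt (xi - 2 * rho * E))
  = sqrt (xi - 2 * rho * E).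
Proof.
  intros rho_gt0 xi_gt0 HD.
  set (d := sqrt (xi - 2 * rho * E)).
  assert (Hd2 : d * d = xi - 2 * rho * E) by (apply sqrt_sqrt; lra).
  assert (Hd : 0 < d) by (apply sqrt_lt_R0; lra).
  replace (xi + rho ^ 2 * (E / d) ^ 2) with (((xi - rho * E) / d) ^ 2)
    by (field_simplify; [replace (d ^ 2) with (d * d) by ring; rewrite Hd2; field | lra..]; lra).
  rewrite sqrt_pow2 by (apply Rdiv_le_0_compat; lra).
  apply (Rmult_eq_reg_r d); [|lra].
  field_simplify; [|lra]. replace (d ^ 2) with (d * d) by ring. rewrite Hd2; ring.
Qed.

Definition radial_poly (D E L u : R) : R := D * u ^ 2 - 2 * E * u + L ^ 2.

Lemma Qrad_radial_poly (rho xi E L r : R) : 0 < r ->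
  Qrad rho xi E L r = - radial_poly (xi - 2 * rho * E) E L (r ^ 2) / r ^ 2.
Proof. intros r_gt0; unfold Qrad, radial_poly; field; lra. Qed.

Lemma H0_level_Qrad (rho xi E L r p : R) : 0 < rho -> 0 < r ->
  H0 rho xi r p L = E -> p ^ 2 = Qrad rho xi E L r.
Proof. intros rho_gt0 r_gt0 <-; unfold Qrad, H0; field; split; nra. Qed.

Lemma radial_poly_vieta (D E L a b : R) : 0 < a < b ->
  radial_poly D E L (a ^ 2) = 0 -> radial_poly D E L (b ^ 2) = 0 ->
  D * (a ^ 2 + b ^ 2) = 2 * E /\ L ^ 2 = D * (a ^ 2 * b ^ 2).
Proof.
  unfold radial_poly; intros Hab Ha Hb.
  assert (Hsum : D * (a ^ 2 + b ^ 2) = 2 * E).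
  { assert (Hf : (b ^ 2 - a ^ 2) * (D * (a ^ 2 + b ^ 2) - 2 * E) = 0) by lra.
    apply Rmult_integral in Hf as [Hf | Hf]; nra. }
  split; [exact Hsum | nra].
Qed.

Lemma radial_poly_increasing (D E L u v : R) : 0 < D -> E <= D * u -> u < v ->
  radial_poly D E L u < radial_poly D E L v.
Proof.
  intros HD Hu Huv; unfold radial_poly.
  assert (0 < (v - u) * (D * (u + v) - 2 * E)) by (apply Rmult_lt_0_compat; nra).
  nra.
Qed.

Lemma Derive_eta (f : R -> R) (t : R) : Derive (fun x => f x) t = Derive f t.
Proof. reflexivity. Qed.

Lemma is_derive_asin x : -1 < x < 1 -> is_derive asin x (/ sqrt (1 - x ^ 2)).
Proof.
  intros Hx; apply is_derive_Reals.
  pose proof (derive_pt_eq_1 _ _ _ _ (derive_pt_asin x Hx)) as Hd.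
  unfold Rsqr in Hd; replace (x ^ 2) with (x * x) by ring.
  replace (/ sqrt (1 - x * x)) with (1 / sqrt (1 - x * x)) by (unfold Rdiv; ring); exact Hd.
Qed.

Lemma asin_ge_1 x : 1 <= x -> asin x = PI / 2.
Proof. intros Hx; unfold asin; destruct (Rle_dec x (-1)); [lra|]; destruct (Rle_dec 1 x); lra. Qed.

Lemma continuous_asin_1 : continuous asin 1.
Proof.
  apply continuity_pt_filterlim; intros eps eps_gt0.
  pose proof PI_RGT_0 as PI_gt0.
  set (e := Rmin eps (PI / 2)).
  assert (e_gt0 : 0 < e) by (apply Rmin_glb_lt; lra).
  assert (e_le : e <= eps /\ e <= PI / 2) by (split; [apply Rmin_l | apply Rmin_r]).
  assert (Hsin : sin (PI / 2 - e) < 1) by (rewrite <- sin_PI2; apply sin_increasing_1; lra).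
  assert (sin_ge0 : 0 <= sin (PI / 2 - e)) by (apply sin_ge_0; lra).
  exists (1 - sin (PI / 2 - e)); split; [lra|].
  intros x [_ Hx]; simpl in *; unfold R_dist in *; rewrite asin_1.
  destruct (Rle_dec 1 x) as [Hx1 | Hx1].
  - rewrite asin_ge_1, Rminus_diag, Rabs_R0 by lra; lra.
  - rewrite Rabs_left1 in Hx by lra.
    pose proof (asin_bound x).
    assert (PI / 2 - e < asin x).
    { apply Rnot_le_lt; intro Hle.
      destruct (Rle_lt_or_eq_dec _ _ Hle) as [Hlt | Heq].
      - apply sin_increasing_1 in Hlt; [rewrite sin_asin in Hlt|..]; lra.
      - apply (f_equal sin) in Heq; rewrite sin_asin in Heq; lra. }
    rewrite Rabs_left1; lra.
Qed.

Lemma continuous_asin_m1 : continuous asin (-1).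
Proof.
  apply (continuous_ext (fun y => - asin (- y))).
  { intro y; rewrite asin_opp; apply Ropp_involutive. }
  apply continuity_pt_filterlim, (continuity_pt_opp (fun y => asin (- y))).
  apply (continuity_pt_comp (fun y => - y) asin), continuity_pt_filterlim;
    [apply continuity_pt_opp, continuity_pt_id |].
  replace (- -1) with 1 by ring; apply continuous_asin_1.
Qed.

Lemma continuous_Rplus (f g : R -> R) x :
  continuous f x -> continuous g x -> continuous (fun y => f y + g y) x.
Proof. apply (continuous_plus f g). Qed.

Lemma continuous_Rminus (f g : R -> R) x :
  continuous f x -> continuous g x -> continuous (fun y => f y - g y) x.
Proof. apply (continuous_minus f g). Qed.

Lemma continuous_Rmult (f g : R -> R) x :
  continuous f x -> continuous g x -> continuous (fun y => f y * g y) x.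
Proof. apply (continuous_mult f g). Qed.

Lemma ex_derive_continuous_R (f : R -> R) x : ex_derive f x -> continuous f x.
Proof. apply (ex_derive_continuous (K := R_AbsRing) (V := R_NormedModule)). Qed.

Definition asin_arg1 (A B u : R) : R := (2 * u - A - B) / (B - A).
Definition asin_arg2 (A B u : R) : R := ((A + B) * u - 2 * A * B) / (u * (B - A)).

(* Assembled from the tabulated integrals of 1 / sqrt R and 1 / (u sqrt R), R = (u - A) (B - u);
   both arcsine arguments are -1 at u = A and 1 at u = B. *)
Definition radial_primitive (A B u : R) : R :=
  / 2 * (sqrt ((u - A) * (B - u)) + (A + B) / 2 * asin (asin_arg1 A B u)
         - sqrt (A * B) * asin (asin_arg2 A B u)).

Section Primitive.
Variables (A B : R).
Hypothesis A_gt0 : 0 < A.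
Hypothesis A_lt_B : A < B.

Lemma asin_arg1_bound u : A < u < B -> -1 < asin_arg1 A B u < 1.
Proof.
  intros Hu; unfold asin_arg1; split;
    [apply Rlt_div_r | apply Rlt_div_l]; lra.
Qed.

Lemma asin_arg2_bound u : A < u < B -> -1 < asin_arg2 A B u < 1.
Proof.
  intros Hu; unfold asin_arg2; split;
    [apply Rlt_div_r | apply Rlt_div_l]; nra.
Qed.

Lemma sqrt_1_sub_asin_arg1 u : A < u < B ->
  sqrt (1 - asin_arg1 A B u ^ 2) = 2 * sqrt ((u - A) * (B - u)) / (B - A).
Proof.
  intros Hu.
  replace (1 - asin_arg1 A B u ^ 2) with ((2 / (B - A)) ^ 2 * ((u - A) * (B - u)))
    by (unfold asin_arg1; field; lra).
  rewrite sqrt_mult, sqrt_pow2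
    by first [apply pow2_ge_0 | apply Rlt_le, Rdiv_lt_0_compat; nra | nra].
  field; lra.
Qed.

Lemma sqrt_1_sub_asin_arg2 u : A < u < B ->
  sqrt (1 - asin_arg2 A B u ^ 2) = 2 * sqrt (A * B) * sqrt ((u - A) * (B - u)) / (u * (B - A)).
Proof.
  intros Hu.
  replace (1 - asin_arg2 A B u ^ 2) with ((2 / (u * (B - A))) ^ 2 * ((A * B) * ((u - A) * (B - u))))
    by (unfold asin_arg2; field; lra).
  rewrite sqrt_mult, sqrt_pow2, sqrt_mult
    by first [apply pow2_ge_0 | apply Rlt_le, Rdiv_lt_0_compat; nra | apply Rmult_le_pos; nra].
  field; nra.
Qed.

Lemma is_derive_radial_primitive u : A < u < B ->
  is_derive (radial_primitive A B) u (sqrt ((u - A) * (B - u)) / (2 * u)).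
Proof.
  intros Hu.
  pose proof (asin_arg1_bound u Hu) as H1; pose proof (asin_arg2_bound u Hu) as H2.
  assert (D1 : is_derive (asin_arg1 A B) u (2 / (B - A)))
    by (unfold asin_arg1; auto_derive; [lra | field; lra]).
  assert (D2 : is_derive (asin_arg2 A B) u (2 * A * B / ((B - A) * u ^ 2)))
    by (unfold asin_arg2; auto_derive; [nra | field; nra]).
  assert (Hsqrt : 0 < sqrt ((u - A) * (B - u))) by (apply sqrt_lt_R0; nra).
  unfold radial_primitive; auto_derive.
  - repeat split;
      try (eexists; eassumption); try (eexists; apply is_derive_asin; assumption); nra.
  - rewrite (Derive_eta (asin_arg1 A B)), (Derive_eta (asin_arg2 A B)),
      (Derive_eta asin (asin_arg1 A B u)), (Derive_eta asin (asin_arg2 A B u)),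
      (is_derive_unique _ _ _ D1), (is_derive_unique _ _ _ D2),
      (is_derive_unique _ _ _ (is_derive_asin _ H1)),
      (is_derive_unique _ _ _ (is_derive_asin _ H2)),
      sqrt_1_sub_asin_arg1, sqrt_1_sub_asin_arg2 by exact Hu.
    replace ((u + - A) * (B + - u)) with ((u - A) * (B - u)) by ring.
    assert (HAB : 0 < sqrt (A * B)) by (apply sqrt_lt_R0; nra).
    assert (Hsq : sqrt ((u - A) * (B - u)) * sqrt ((u - A) * (B - u)) = (u - A) * (B - u))
      by (apply sqrt_sqrt; nra).
    match goal with |- ?a = ?b => change (@eq R a b) end.
    set (s := sqrt ((u - A) * (B - u))) in *; set (q := sqrt (A * B)) in *.
    replace (s / (2 * u)) with ((u - A) * (B - u) / (2 * u * s)) by (rewrite <- Hsq; field; lra).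
    field; repeat split; lra.
Qed.

Lemma continuous_radial_primitive_end u : u = A \/ u = B -> continuous (radial_primitive A B) u.
Proof.
  intros Hu.
  assert (asin_end : forall h : R -> R, (forall y, 0 < y -> ex_derive h y) ->
            h u = 1 \/ h u = -1 -> continuous (fun y => asin (h y)) u).
  { intros h Hh Hend; apply (continuous_comp h asin).
    - apply ex_derive_continuous_R, Hh; lra.
    - destruct Hend as [-> | ->]; [apply continuous_asin_1 | apply continuous_asin_m1]. }
  unfold radial_primitive.
  apply (continuous_Rmult (fun _ => / 2)); [apply continuous_const|].
  apply continuous_Rminus; [apply continuous_Rplus|].
  - apply continuous_sqrt_comp, ex_derive_continuous_R; auto_derive; auto.
  - apply (continuous_Rmult (fun _ => (A + B) / 2)); [apply continuous_const|].
    apply asin_end; unfold asin_arg1.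
    + intros y _; auto_derive; lra.
    + destruct Hu as [-> | ->]; [right | left]; field; lra.
  - apply (continuous_Rmult (fun _ => sqrt (A * B))); [apply continuous_const|].
    apply asin_end; unfold asin_arg2.
    + intros y y_gt0; auto_derive; nra.
    + destruct Hu as [-> | ->]; [right | left]; field; lra.
Qed.

Lemma radial_primitive_A : radial_primitive A B A = - PI / 4 * ((A + B) / 2 - sqrt (A * B)).
Proof.
  unfold radial_primitive, asin_arg1, asin_arg2.
  replace ((2 * A - A - B) / (B - A)) with (- (1)) by (field; lra).
  replace (((A + B) * A - 2 * A * B) / (A * (B - A))) with (- (1)) by (field; lra).
  rewrite asin_opp, asin_1, Rminus_diag, Rmult_0_l, sqrt_0; field.
Qed.

Lemma radial_primitive_B : radial_primitive A B B = PI / 4 * ((A + B) / 2 - sqrt (A * B)).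
Proof.
  unfold radial_primitive, asin_arg1, asin_arg2.
  replace ((2 * B - A - B) / (B - A)) with 1 by (field; lra).
  replace (((A + B) * B - 2 * A * B) / (B * (B - A))) with 1 by (field; lra).
  rewrite asin_1, Rminus_diag, Rmult_0_r, sqrt_0; field.
Qed.

End Primitive.

Lemma is_derive_RInt_inside (f : R -> R) (a c d x : R) : c < a < d -> c < x < d ->
  (forall z, c < z < d -> continuous f z) -> is_derive (fun y => RInt f a y) x (f x).
Proof.
  intros Ha Hx Hf.
  apply (is_derive_RInt f _ a x); [| apply Hf; exact Hx].
  assert (del_gt0 : 0 < Rmin (x - c) (d - x)) by (apply Rmin_glb_lt; lra).
  exists (mkposreal _ del_gt0); intros y Hy.
  change (Rabs (y - x) < Rmin (x - c) (d - x)) in Hy.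
  pose proof (Rmin_l (x - c) (d - x)); pose proof (Rmin_r (x - c) (d - x)).
  apply Rabs_def2 in Hy.
  apply (RInt_correct f a y), ex_RInt_continuous; intros z Hz; apply Hf; split.
  - eapply Rlt_le_trans; [| apply Hz]; apply Rmin_glb_lt; lra.
  - eapply Rle_lt_trans; [apply Hz |]; apply Rmax_lub_lt; lra.
Qed.

(* Unlike [RInt_Derive], F need not be differentiable at the endpoints: primitives involving
   asin at +-1 are not. *)
Lemma RInt_open_antiderivative (f F : R -> R) (a b c d : R) : c < a -> a < b -> b < d ->
  (forall x, c < x < d -> continuous f x) ->
  (forall x, a < x < b -> is_derive F x (f x)) ->
  continuous F a -> continuous F b -> RInt f a b = F b - F a.
Proof.
  intros Hca Hab Hbd Hf HF HFa HFb.
  set (G := fun x => RInt f a x - F x).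
  assert (HG : forall x, a < x < b -> is_derive G x 0).
  { intros x Hx; unfold G; replace 0 with (f x - f x) by ring.
    apply (is_derive_minus (fun y => RInt f a y) F); [| apply HF; exact Hx].
    apply (is_derive_RInt_inside f a c d); auto; lra. }
  assert (dG : forall x, a < x < b -> derivable_pt G x).
  { intros x Hx; exists 0; apply is_derive_Reals, HG, Hx. }
  assert (G_cont : forall x, a <= x <= b -> continuity_pt G x).
  { intros x Hx; apply continuity_pt_filterlim, (continuous_minus (fun y => RInt f a y) F).
    - apply ex_derive_continuous_R; eexists; apply (is_derive_RInt_inside f a c d); auto; lra.
    - destruct (Req_dec x a) as [-> | Hxa]; [exact HFa|].
      destruct (Req_dec x b) as [-> | Hxb]; [exact HFb|].
      apply ex_derive_continuous_R; eexists; apply HF; lra. }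
  assert (G_flat : forall x (Hx : a < x < b), derive_pt G x (dG x Hx) = 0).
  { intros x Hx; apply derive_pt_eq_0, is_derive_Reals, HG, Hx. }
  assert (Gba : G b = G a) by (apply (null_derivative_loc G a b dG G_cont G_flat); lra).
  unfold G in Gba; rewrite RInt_point in Gba; unfold zero in Gba; simpl in Gba; lra.
Qed.

Lemma continuous_radial_integrand (a b x : R) : 0 < x ->
  continuous (fun r => sqrt ((r ^ 2 - a ^ 2) * (b ^ 2 - r ^ 2)) / r) x.
Proof.
  intros x_gt0.
  apply (continuous_Rmult (fun r => sqrt ((r ^ 2 - a ^ 2) * (b ^ 2 - r ^ 2))) (fun r => / r)).
  - apply continuous_sqrt_comp, ex_derive_continuous_R; auto_derive; auto.
  - apply ex_derive_continuous_R; auto_derive; lra.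
Qed.

Lemma RInt_radial_action (a b : R) : 0 < a < b ->
  RInt (fun r => sqrt ((r ^ 2 - a ^ 2) * (b ^ 2 - r ^ 2)) / r) a b = PI * (b - a) ^ 2 / 4.
Proof.
  intros Hab.
  assert (HAB : 0 < a ^ 2 < b ^ 2) by (split; nra).
  assert (prim_end : forall u, u = a \/ u = b ->
            continuous (fun r => radial_primitive (a ^ 2) (b ^ 2) (r ^ 2)) u).
  { intros u Hu; apply (continuous_comp (fun r => r ^ 2) (radial_primitive (a ^ 2) (b ^ 2))).
    - apply ex_derive_continuous_R; auto_derive; auto.
    - apply continuous_radial_primitive_end; [lra.. | destruct Hu as [-> | ->]; auto]. }
  rewrite (RInt_open_antiderivative _ (fun r => radial_primitive (a ^ 2) (b ^ 2) (r ^ 2))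
             a b (a / 2) (b + 1)); try lra.
  - rewrite radial_primitive_A, radial_primitive_B by lra.
    replace (a ^ 2 * b ^ 2) with ((a * b) ^ 2) by ring.
    rewrite sqrt_pow2 by nra.
    match goal with |- ?x = ?y => change (@eq R x y) end; field.
  - intros x Hx; apply continuous_radial_integrand; lra.
  - intros x Hx.
    replace (sqrt ((x ^ 2 - a ^ 2) * (b ^ 2 - x ^ 2)) / x)
      with (scal (2 * x) (sqrt ((x ^ 2 - a ^ 2) * (b ^ 2 - x ^ 2)) / (2 * x ^ 2))).
    + apply (is_derive_comp (radial_primitive (a ^ 2) (b ^ 2)) (fun r => r ^ 2)).
      * apply is_derive_radial_primitive; nra.
      * auto_derive; auto; ring.
    + unfold scal; simpl; unfold mult; simpl; field; lra.
  - apply prim_end; auto.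
  - apply prim_end; auto.
Qed.

Lemma radial_poly_Qrad_root (rho xi E L r : R) : 0 < r -> Qrad rho xi E L r = 0 ->
  radial_poly (xi - 2 * rho * E) E L (r ^ 2) = 0.
Proof.
  intros r_gt0 Qr.
  assert (radial_poly (xi - 2 * rho * E) E L (r ^ 2) = - Qrad rho xi E L r * r ^ 2)
    by (rewrite Qrad_radial_poly by exact r_gt0; field; lra).
  rewrite Qr in *; lra.
Qed.

Lemma Ir_add_L (rho xi E L a b : R) : 0 < L -> 0 < xi - 2 * rho * E -> 0 < a < b ->
  Qrad rho xi E L a = 0 -> Qrad rho xi E L b = 0 ->
  Ir rho xi E L a b + L = E / sqrt (xi - 2 * rho * E).
Proof.
  intros L_gt0 D_gt0 Hab Qa Qb.
  set (D := xi - 2 * rho * E) in *.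
  destruct (radial_poly_vieta D E L a b Hab) as [Hsum Hprod];
    [apply radial_poly_Qrad_root; lra.. |].
  set (d := sqrt D).
  assert (Hd2 : d * d = D) by (apply sqrt_sqrt; lra).
  assert (d_gt0 : 0 < d) by (apply sqrt_lt_R0; lra).
  assert (HL : L = d * (a * b)).
  { apply Rsqr_inj; [lra | apply Rmult_le_pos; nra |].
    unfold Rsqr; rewrite <- Hd2 in Hprod; nra. }
  assert (sqrt_Qrad : forall x, a < x < b ->
            sqrt (Qrad rho xi E L x) = d * (sqrt ((x ^ 2 - a ^ 2) * (b ^ 2 - x ^ 2)) / x)).
  { intros x Hx.
    replace (Qrad rho xi E L x) with (D * ((x ^ 2 - a ^ 2) * (b ^ 2 - x ^ 2)) / x ^ 2)
      by (rewrite Qrad_radial_poly by lra; unfold radial_poly; fold D;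
          rewrite <- Hsum, Hprod; field; lra).
    rewrite sqrt_div_alt, sqrt_mult, sqrt_pow2 by first [apply Rmult_le_pos; nra | nra].
    unfold d, Rdiv; ring. }
  assert (Hint : RInt (fun r => sqrt (Qrad rho xi E L r)) a b
                 = d * RInt (fun r => sqrt ((r ^ 2 - a ^ 2) * (b ^ 2 - r ^ 2)) / r) a b).
  { rewrite (RInt_ext _ (fun r => d * (sqrt ((r ^ 2 - a ^ 2) * (b ^ 2 - r ^ 2)) / r)))
      by (intros x Hx; rewrite Rmin_left, Rmax_right in Hx by lra; apply sqrt_Qrad, Hx).
    apply (RInt_scal (fun r => sqrt ((r ^ 2 - a ^ 2) * (b ^ 2 - r ^ 2)) / r) a b d).
    apply ex_RInt_continuous; intros x Hx.
    rewrite Rmin_left, Rmax_right in Hx by lra; apply continuous_radial_integrand; lra. }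
  unfold Ir; rewrite Hint, RInt_radial_action, HL by lra.
  rewrite <- Hd2 in Hsum; replace E with (d * d * (a ^ 2 + b ^ 2) / 2) by lra.
  field; split; [lra | apply PI_neq0].
Qed.

Definition dH0_dr (rho xi r p q : R) : R :=
  ((- 2 * q ^ 2 / r ^ 3 + 2 * xi * r) * (1 + rho * r ^ 2)
   - (p ^ 2 + q ^ 2 / r ^ 2 + xi * r ^ 2) * (2 * rho * r)) / (2 * (1 + rho * r ^ 2) ^ 2).

Lemma circular_orbit_energy (rho xi E L r : R) : 0 < rho -> 0 < r ->
  dH0_dr rho xi r 0 L = 0 -> radial_poly (xi - 2 * rho * E) E L (r ^ 2) = 0 ->
  (xi - 2 * rho * E) * r ^ 2 = E.
Proof.
  unfold dH0_dr, radial_poly; intros rho_gt0 r_gt0 Hforce Hlevel.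
  assert (Hbalance : xi * (r ^ 2) ^ 2 - 2 * rho * L ^ 2 * r ^ 2 - L ^ 2 = 0).
  { apply (f_equal (fun x => x * (r ^ 3 * (1 + rho * r ^ 2) ^ 2))) in Hforce.
    field_simplify in Hforce; [|nra..]. nra. }
  assert (Hprod : ((xi - 2 * rho * E) * r ^ 2 - E) * (r ^ 2 * (2 * rho * r ^ 2 + 2))
    = (xi * (r ^ 2) ^ 2 - 2 * rho * L ^ 2 * r ^ 2 - L ^ 2)
      + (1 + 2 * rho * r ^ 2) * ((xi - 2 * rho * E) * (r ^ 2) ^ 2 - 2 * E * r ^ 2 + L ^ 2))
    by ring.
  rewrite Hbalance, Hlevel, Rmult_0_r, Rplus_0_l in Hprod.
  assert (0 < r ^ 2 * (2 * rho * r ^ 2 + 2)) by (apply Rmult_lt_0_compat; nra).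
  apply Rmult_integral in Hprod as [Hprod | Hprod]; lra.
Qed.

Lemma Derive_H0_pr (rho xi r p q : R) : 0 < rho ->
  Derive (fun p => H0 rho xi r p q) p = p / (1 + rho * r ^ 2).
Proof. intros rho_gt0; apply is_derive_unique; unfold H0; auto_derive; [nra | field; nra]. Qed.

Lemma Derive_H0_pphi (rho xi r p q : R) : 0 < rho -> r <> 0 ->
  Derive (fun q => H0 rho xi r p q) q = q / (r ^ 2 * (1 + rho * r ^ 2)).
Proof.
  intros rho_gt0 r_neq0; apply is_derive_unique; unfold H0; auto_derive.
  - repeat split; nra.
  - field; split; nra.
Qed.

Lemma Derive_H0_r (rho xi r p q : R) : 0 < rho -> r <> 0 ->
  Derive (fun r => H0 rho xi r p q) r = dH0_dr rho xi r p q.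
Proof.
  intros rho_gt0 r_neq0; apply is_derive_unique; unfold H0, dH0_dr; auto_derive.
  - repeat split; nra.
  - field; split; nra.
Qed.

Lemma is_derive_0_const (f : R -> R) : (forall t, is_derive f t 0) -> forall s t, f s = f t.
Proof.
  intros Hf s t.
  destruct (Rtotal_order s t) as [Hst | [-> | Hts]];
    [apply eq_is_derive | | symmetry; apply eq_is_derive]; auto.
Qed.

Lemma is_derive_argmin_0 (f : R -> R) (c l : R) :
  is_derive f c l -> (forall x, f c <= f x) -> l = 0.
Proof.
  intros Hf Hmin; apply is_derive_Reals in Hf.
  pose (df := exist (fun l => derivable_pt_lim f c l) l Hf : derivable_pt f c).
  rewrite <- (derive_pt_eq_0 f c l df Hf).
  apply (deriv_minimum f (c - 1) (c + 1) c df); auto; lra.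
Qed.

Section Flow.

Variables (rho xi : R) (r phi pr pphi : R -> R).
Hypothesis rho_gt0 : 0 < rho.
Hypothesis hamilton : hamilton_solution rho xi r phi pr pphi.
Hypothesis r_gt0 : forall t, 0 < r t.

Lemma is_derive_r t : is_derive r t (pr t / (1 + rho * r t ^ 2)).
Proof.
  rewrite <- (Derive_H0_pr rho xi (r t) (pr t) (pphi t)) by exact rho_gt0; apply hamilton.
Qed.

Lemma is_derive_phi t : is_derive phi t (pphi t / (r t ^ 2 * (1 + rho * r t ^ 2))).
Proof.
  pose proof (r_gt0 t).
  rewrite <- (Derive_H0_pphi rho xi (r t) (pr t) (pphi t)) by lra; apply hamilton.
Qed.

Lemma is_derive_pr t : is_derive pr t (- dH0_dr rho xi (r t) (pr t) (pphi t)).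
Proof.
  pose proof (r_gt0 t).
  rewrite <- (Derive_H0_r rho xi (r t) (pr t) (pphi t)) by lra; apply hamilton.
Qed.

Lemma is_derive_pphi t : is_derive pphi t 0.
Proof. apply hamilton. Qed.

Ltac conserved :=
  apply is_derive_0_const; let t := fresh "t" in intro t;
  pose proof (r_gt0 t) as rt_gt0;
  assert (dr : ex_derive r t) by (eexists; apply is_derive_r);
  assert (dphi : ex_derive phi t) by (eexists; apply is_derive_phi);
  assert (dpr : ex_derive pr t) by (eexists; apply is_derive_pr);
  assert (dpphi : ex_derive pphi t) by (eexists; apply is_derive_pphi);
  unfold S1, S2, H0; auto_derive;
  [ repeat split; auto; nra
  | rewrite (Derive_eta r), ?(Derive_eta phi), (Derive_eta pr), (Derive_eta pphi),
      (is_derive_unique _ _ _ (is_derive_r t)),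
      ?(is_derive_unique _ _ _ (is_derive_phi t)),
      (is_derive_unique _ _ _ (is_derive_pr t)), (is_derive_unique _ _ _ (is_derive_pphi t));
    match goal with |- ?a = ?b => change (@eq R a b) end;
    unfold dH0_dr; field; repeat split; nra ].

Lemma pphi_const s t : pphi s = pphi t.
Proof. apply is_derive_0_const, is_derive_pphi. Qed.

Lemma H0_const s t : H0 rho xi (r s) (pr s) (pphi s) = H0 rho xi (r t) (pr t) (pphi t).
Proof. revert s t; conserved. Qed.

Lemma S1_const s t :
  S1 rho xi (r s) (phi s) (pr s) (pphi s) = S1 rho xi (r t) (phi t) (pr t) (pphi t).
Proof. revert s t; conserved. Qed.

Lemma S2_const s t :
  S2 rho xi (r s) (phi s) (pr s) (pphi s) = S2 rho xi (r t) (phi t) (pr t) (pphi t).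
Proof. revert s t; conserved. Qed.

Variables (E L t0 : R).
Hypothesis energy0 : H0 rho xi (r 0) (pr 0) (pphi 0) = E.
Hypothesis momentum0 : pphi 0 = L.
Hypothesis gap_gt0 : 0 < xi - 2 * rho * E.
Hypothesis r_min : forall t, r t0 <= r t.
Hypothesis phi_pericentre : phi t0 = 0.

Lemma pphi_eq t : pphi t = L.
Proof. rewrite <- momentum0; apply pphi_const. Qed.

Lemma H0_eq t : H0 rho xi (r t) (pr t) L = E.
Proof. rewrite <- (pphi_eq t), <- energy0; apply H0_const. Qed.

Lemma radial_poly_flow t :
  radial_poly (xi - 2 * rho * E) E L (r t ^ 2) = - pr t ^ 2 * r t ^ 2.
Proof.
  pose proof (r_gt0 t) as rt_gt0.
  rewrite (H0_level_Qrad rho xi E L (r t) (pr t)), Qrad_radial_poly by auto using H0_eq.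
  field; lra.
Qed.

Lemma pr_pericentre : pr t0 = 0.
Proof.
  pose proof (r_gt0 t0) as rt_gt0.
  pose proof (is_derive_argmin_0 r t0 _ (is_derive_r t0) r_min) as Hv.
  apply (f_equal (fun v => v * (1 + rho * r t0 ^ 2))) in Hv.
  field_simplify in Hv; nra.
Qed.

Lemma radial_poly_pericentre : radial_poly (xi - 2 * rho * E) E L (r t0 ^ 2) = 0.
Proof. rewrite radial_poly_flow, pr_pericentre; ring. Qed.

(* If r_min^2 were the larger turning point, r >= r_min would force a circular orbit, and a
   circular orbit sits at the double root E / (xi - 2 rho E). *)
Lemma pericentre_smaller_root : (xi - 2 * rho * E) * r t0 ^ 2 <= E.
Proof.
  apply Rnot_lt_le; intro Hbig.
  pose proof (r_gt0 t0) as rt0_gt0.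
  assert (circular : forall t, pr t = 0).
  { intro t; pose proof (r_gt0 t); pose proof (r_min t).
    assert (Hu : r t ^ 2 = r t0 ^ 2).
    { destruct (Rle_lt_or_eq_dec (r t0 ^ 2) (r t ^ 2)) as [Hlt | Heq]; [nra | | auto].
      pose proof (radial_poly_increasing _ E L _ _ gap_gt0 (Rlt_le _ _ Hbig) Hlt).
      rewrite radial_poly_pericentre, radial_poly_flow in *; nra. }
    pose proof (radial_poly_flow t) as Hflow.
    rewrite Hu, radial_poly_pericentre in Hflow.
    assert (Hsq : pr t ^ 2 * r t0 ^ 2 = 0) by lra.
    apply Rmult_integral in Hsq as [Hsq | Hsq]; [| nra].
    destruct (Req_dec (pr t) 0) as [| Hne]; [auto | now apply (pow_nonzero _ 2) in Hne]. }
  assert (Hforce : dH0_dr rho xi (r t0) 0 L = 0).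
  { assert (pr_still : is_derive pr t0 0).
    { apply (is_derive_ext (fun _ => 0)); [intro; symmetry; apply circular | auto_derive; auto]. }
    pose proof (is_derive_unique _ _ _ (is_derive_pr t0)) as Hpr.
    rewrite (is_derive_unique _ _ _ pr_still), circular, pphi_eq in Hpr; lra. }
  pose proof (circular_orbit_energy rho xi E L (r t0) rho_gt0 rt0_gt0 Hforce
                radial_poly_pericentre); lra.
Qed.

Lemma S1_flow t : S1 rho xi (r t) (phi t) (pr t) (pphi t) = 0.
Proof.
  rewrite (S1_const t t0); unfold S1.
  rewrite phi_pericentre, pr_pericentre, (Rmult_0_r 2), sin_0; ring.
Qed.

Lemma S2_flow t :
  S2 rho xi (r t) (phi t) (pr t) (pphi t) = (xi - 2 * rho * E) * r t0 ^ 2 - E.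
Proof.
  pose proof (r_gt0 t0); pose proof radial_poly_pericentre as Hroot; unfold radial_poly in Hroot.
  rewrite (S2_const t t0); unfold S2.
  rewrite phi_pericentre, pphi_eq, H0_eq, pr_pericentre, (Rmult_0_r 2), sin_0, cos_0.
  replace (L ^ 2) with (2 * E * r t0 ^ 2 - (xi - 2 * rho * E) * (r t0 ^ 2) ^ 2) by lra.
  field; lra.
Qed.

End Flow.

Lemma pericentre_S2_value (D E L u : R) : 0 < D -> 0 < u ->
  radial_poly D E L u = 0 -> D * u <= E ->
  D * u - E = - sqrt ((E / sqrt D) ^ 2 - L ^ 2) * sqrt D.
Proof.
  unfold radial_poly; intros HD Hu Hroot Hle.
  set (d := sqrt D).
  assert (Hd2 : d * d = D) by (apply sqrt_sqrt; lra).
  assert (Hd : 0 < d) by (apply sqrt_lt_R0; lra).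
  replace ((E / d) ^ 2 - L ^ 2) with (((E - D * u) / d) ^ 2).
  - rewrite sqrt_pow2 by (apply Rdiv_le_0_compat; lra); field; lra.
  - replace (L ^ 2) with (2 * E * u - D * u ^ 2) by lra.
    rewrite <- Hd2; field; lra.
Qed.

Theorem proposition20 (rho xi E L : R) :
  0 < rho -> 0 < xi -> 0 < L ->
  E_plus rho xi L < E -> E < xi / (2 * rho) ->
  let J := E / sqrt (xi - 2 * rho * E) in
  Iphi L = L /\
  (forall a b : R, 0 < a -> a < b ->
     Qrad rho xi E L a = 0 -> Qrad rho xi E L b = 0 ->
     (forall x, a < x < b -> 0 < Qrad rho xi E L x) ->
     Ir rho xi E L a b + Iphi L = J) /\
  E = J * (sqrt (xi + rho ^ 2 * J ^ 2) - rho * J) /\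
  (forall (r phi pr pphi : R -> R) (t0 : R),
     hamilton_solution rho xi r phi pr pphi ->
     (forall t, 0 < r t) ->
     H0 rho xi (r 0) (pr 0) (pphi 0) = E -> pphi 0 = L ->
     (forall t, r t0 <= r t) -> phi t0 = 0 ->
     forall t,
       S1 rho xi (r t) (phi t) (pr t) (pphi t) = 0 /\
       S2 rho xi (r t) (phi t) (pr t) (pphi t) =
         - sqrt (J ^ 2 - (Iphi L) ^ 2) * (sqrt (xi + rho ^ 2 * J ^ 2) - rho * J)).
Proof.
  (* [E_+ < E] only guarantees that such trajectories exist; the identities need
     just [E < xi / (2 rho)]. *)
  intros rho_gt0 xi_gt0 L_gt0 _ HE J.
  pose proof (sub_2rhoE_gt0 rho xi E rho_gt0 HE) as D_gt0.
  pose proof (sqrt_xi_rhoJ_sub rho xi E rho_gt0 xi_gt0 D_gt0) as Hfreq; fold J in Hfreq.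
  rewrite Hfreq, Iphi_eq.
  split; [reflexivity|].
  split; [intros a b a_gt0 Hab Qa Qb _; apply Ir_add_L; auto|].
  split; [unfold J; field; apply Rgt_not_eq, sqrt_lt_R0, D_gt0|].
  intros r phi pr pphi t0 Hham r_gt0 energy0 momentum0 r_min phi0 t.
  split; [eapply S1_flow; eauto|].
  erewrite S2_flow; eauto.
  unfold J; apply pericentre_S2_value;
    [exact D_gt0 | apply pow_lt, r_gt0
    | eapply radial_poly_pericentre | eapply pericentre_smaller_root]; eauto.
Qed.
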